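(* Let $X \subset \mathbb{R}^{2n}$ be a symplectically self-polar convex body with $C^1$-smooth boundary, $T$ its symplectic outer billiard map, and $Y=\{x+f(x): x\in\partial X\}$. Then $Y\subset\mathbb{R}^{2n}\setminus X$ and $T(Y)=Y$; more precisely $T(x+f(x))=f(x)+f(f(x))$ for every $x\in\partial X$.
   Context: $\mathbb{R}^{2n}\cong\mathbb{C}^n$, $J$ is multiplication by $\sqrt{-1}$, $\omega(u,v)=\langle Ju,v\rangle$. For a convex body $X$ with origin in its interior, $X^\omega=\{y: \omega(x,y)\le 1\ \forall x\in X\}$; $X$ is symplectically self-polar if $X=X^\omega$. For $C^1$ boundary, $f\colon\partial X\to\partial X^\omega$ assigns to $x$ the unique $f(x)\in X^\omega$ with $\omega(x,f(x))=1$. Symplectic outer billiard map: for a strictly convex body $X$ with $C^1$ boundary and $z\notin X$, there is a unique $x\in\partial X$ such that the line through $z,x$ is the characteristic line $\ker(\omega|_{T_x\partial X})$ and $\omega(x,x-z)>0$; then $T(z)=2x-z$. *)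

From HB Require Import structures.
From mathcomp Require Import all_boot all_order all_algebra.
From mathcomp Require Import all_classical all_reals all_analysis.
Set Implicit Arguments. Unset Strict Implicit. Unset Printing Implicit Defensive.
Import Order.TTheory GRing.Theory Num.Theory.
Import numFieldNormedType.Exports.
Local Open Scope classical_set_scope.
Local Open Scope ring_scope.

(* Model of R^{2n} = C^n : row vectors of length n + n, a point (a, b)
   (a, b in R^n) standing for the complex vector a + sqrt(-1) b. *)
Section SymplecticOuterBilliards.
Variables (R : realType) (n : nat).
Local Notation V := 'rV[R]_(n + n).

(* J = multiplication by sqrt(-1): (a, b) |-> (-b, a). *)
Definition Jmul (u : V) : V := row_mx (- rsubmx u) (lsubmx u).

Definition inner (u v : V) : R := \sum_(i < n + n) u ord0 i * v ord0 i.

Definition omega (u v : V) : R := inner (Jmul u) v.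

Definition convex (X : set V) : Prop :=
  forall x y (t : R), X x -> X y -> 0 <= t -> t <= 1 ->
    X (t *: x + (1 - t) *: y).

Definition convex_body_0 (X : set V) : Prop :=
  convex X /\ compact X /\ (interior X) 0.

Definition boundary (X : set V) : set V := closure X `\` interior X.

Definition omega_polar (X : set V) : set V :=
  [set y | forall x, X x -> omega x y <= 1].

Definition symp_self_polar (X : set V) : Prop := X = omega_polar X.

Definition local_defining_fun (X : set V) (p : V) (U : set V)
    (rho : V -> R) (g : V -> V) : Prop :=
  [/\ open U /\ U p,
      (forall y, U y -> differentiable rho y /\
                       forall v, 'd rho y v = inner (g y) v),
      {within U, continuous g},
      (forall y, U y -> g y != 0) &
      X `&` U = [set y | U y /\ rho y <= 0]].

Definition C1_boundary (X : set V) : Prop :=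
  forall p, boundary X p -> exists U rho g, local_defining_fun X p U rho g.

Definition tangent_space (X : set V) (x : V) : set V :=
  [set v | exists U rho g, local_defining_fun X x U rho g /\ inner (g x) v = 0].

Definition char_dir (X : set V) (x : V) : set V :=
  [set u | tangent_space X x u /\
           forall v, tangent_space X x v -> omega u v = 0].

Definition fpol (X : set V) (x : V) : V :=
  xget 0 [set y | omega_polar X y /\ omega x y = 1].

(* x is the point of boundary X associated to z by the outer billiard:
   the line through z and x is the characteristic line at x, and
   omega(x, x - z) > 0. *)
Definition billiard_point (X : set V) (z x : V) : Prop :=
  [/\ boundary X x, z != x, char_dir X x (z - x) & 0 < omega x (x - z)].

Definition outer_billiard (X : set V) (z : V) : V :=
  let x := xget 0 (billiard_point X z) in 2%:R *: x - z.

End SymplecticOuterBilliards.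

From HB Require Import structures.
From mathcomp Require Import all_boot all_order all_algebra.
From mathcomp Require Import all_classical all_reals all_analysis.
From mathcomp Require Import ring lra.
Import Order.TTheory GRing.Theory Num.Theory.
Import numFieldNormedType.Exports.
Local Open Scope classical_set_scope.
Local Open Scope ring_scope.
Set Implicit Arguments. Unset Strict Implicit.

(* For x on the boundary, f(x) is the point of X with omega(x, f x) = 1: the
   supporting hyperplane of X at x is {y | omega(y, f x) = 1}, so the tangent
   space at x is the omega-orthogonal of f(x) and the characteristic line at x
   is spanned by f(x).  Self-polarity makes X centrally symmetric and gives
   f(f x) = -x.  Hence z = x + f(x) lies on the characteristic line through the
   boundary point f(x), on the correct side, so T(z) = 2 f(x) - z = f(x) - x =
   f(x) + f(f x); the polarity inequalities rule out any other billiard point.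
   If z were in X, then omega(x, z) = 1 would force f(x) = z, i.e. x = 0. *)

Section RayCalculus.
Variables (R : realType) (V : normedModType R).

Lemma ray_cvg (v p : V) : (fun t : R => t *: v + p) @ 0^'+ --> p.
Proof.
apply: cvg_at_right_filter; rewrite -[X in _ --> X]add0r -(scale0r v).
by apply: cvgD; [apply: cvgZ; [exact: cvg_id | exact: cvg_cst] | exact: cvg_cst].
Qed.

Lemma near_ray (A : set V) (p v : V) : nbhs p A ->
  \forall t \near 0^'+, [/\ 0 < t, t <= 1 & A (t *: v + p)].
Proof.
move=> Ap; near=> t; split; near: t.
- exact: nbhs_right_gt.
- exact: nbhs_right_le ltr01.
- exact: ray_cvg.
Unshelve. all: by end_near.
Qed.

Lemma interior_ray (A : set V) (p v : V) : interior A p ->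
  exists2 t : R, 0 < t & A (t *: v + p).
Proof. by move=> /(near_ray v) /filter_ex [t [t0 _ At]]; exists t. Qed.

Lemma diff_ray_increase (f : V -> R) (U : set V) (p v : V) :
  differentiable f p -> nbhs p U -> 0 < 'd f p v ->
  exists t : R, [/\ 0 < t, t <= 1, U (t *: v + p) & f p < f (t *: v + p)].
Proof.
move=> df Up dpos.
have slope : (fun t : R => t^-1 *: (f (t *: v + p) - f p)) @ 0^'+ --> 'd f p v.
  by rewrite -deriveE //; exact: cvg_dnbhs_at_right (diff_derivable df).
have /filter_ex [t [[t0 t1 tU] slope_pos]] : \forall t \near 0^'+,
    [/\ 0 < t, t <= 1 & U (t *: v + p)] /\ 0 < t^-1 *: (f (t *: v + p) - f p).
  by near=> t; split; near: t; [exact: near_ray | exact: cvgr_gt slope _ dpos].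
exists t; split => //.
by move: slope_pos; rewrite /GRing.scale /= pmulr_rgt0 ?invr_gt0 // subr_gt0.
Unshelve. all: by end_near.
Qed.

Lemma diff_ray_decrease (f : V -> R) (U : set V) (p v : V) :
  differentiable f p -> nbhs p U -> 'd f p v < 0 ->
  exists t : R, [/\ 0 < t, t <= 1, U (t *: v + p) & f (t *: v + p) < f p].
Proof.
move=> df Up dneg; have dfN := differentiableN df.
have [|t [t0 t1 tU]] := diff_ray_increase (v := v) dfN Up; first by rewrite diffN // oppr_gt0.
by rewrite !fctE ltrN2; exists t.
Qed.

End RayCalculus.

Section SymplecticAlgebra.
Variables (R : realType) (n : nat).
Local Notation V := 'rV[R]_(n + n).

Lemma innerC (u v : V) : inner u v = inner v u.
Proof. by apply: eq_bigr => i _; rewrite mulrC. Qed.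

Lemma innerDr (u v w : V) : inner u (v + w) = inner u v + inner u w.
Proof. by rewrite /inner -big_split; apply: eq_bigr => i _; rewrite !mxE mulrDr. Qed.

Lemma innerZr (a : R) (u v : V) : inner u (a *: v) = a * inner u v.
Proof. by rewrite /inner mulr_sumr; apply: eq_bigr => i _; rewrite !mxE mulrCA. Qed.

Lemma innerNr (u v : V) : inner u (- v) = - inner u v.
Proof. by rewrite -scaleN1r innerZr mulN1r. Qed.

Lemma innerBr (u v w : V) : inner u (v - w) = inner u v - inner u w.
Proof. by rewrite innerDr innerNr. Qed.

Lemma innerDl (u v w : V) : inner (v + w) u = inner v u + inner w u.
Proof. by rewrite innerC innerDr !(innerC u). Qed.

Lemma innerZl (a : R) (u v : V) : inner (a *: v) u = a * inner v u.
Proof. by rewrite innerC innerZr innerC. Qed.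

Lemma innerNl (u v : V) : inner (- v) u = - inner v u.
Proof. by rewrite innerC innerNr innerC. Qed.

Lemma innerBl (u v w : V) : inner (v - w) u = inner v u - inner w u.
Proof. by rewrite innerDl innerNl. Qed.

Lemma inner_ge0 (u : V) : 0 <= inner u u.
Proof. by apply: sumr_ge0 => i _; rewrite -expr2 sqr_ge0. Qed.

Lemma inner_eq0 (u : V) : (inner u u == 0) = (u == 0).
Proof.
apply/idP/eqP => [|->]; last by rewrite /inner big1 // => i _; rewrite mxE mul0r.
rewrite psumr_eq0 => [/allP u0|i _]; last by rewrite -expr2 sqr_ge0.
apply/rowP => i; have := u0 i (mem_index_enum i).
by rewrite /= mulf_eq0 orbb mxE => /eqP.
Qed.

Lemma inner_gt0 (u : V) : (0 < inner u u) = (u != 0).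
Proof. by rewrite lt_def inner_ge0 inner_eq0 andbT. Qed.

Lemma inner_split (u v : V) : inner u v =
  \sum_(i < n) (lsubmx u 0 i * lsubmx v 0 i + rsubmx u 0 i * rsubmx v 0 i).
Proof.
rewrite /inner big_split_ord big_split /=.
by congr (_ + _); apply: eq_bigr => i _; rewrite !mxE; congr (u _ _ * v _ _);
  apply: val_inj; rewrite /= ?ord1.
Qed.

Lemma lsubmx_Jmul (u : V) : lsubmx (Jmul u) = - rsubmx u.
Proof. exact: row_mxKl. Qed.

Lemma rsubmx_Jmul (u : V) : rsubmx (Jmul u) = lsubmx u.
Proof. exact: row_mxKr. Qed.

Lemma JmulK (u : V) : Jmul (Jmul u) = - u.
Proof.
by rewrite {1}/Jmul lsubmx_Jmul rsubmx_Jmul -{3}(hsubmxK u) opp_row_mx.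
Qed.

Lemma Jmul_inj : injective (@Jmul R n).
Proof. by move=> u v /(congr1 (@Jmul R n)); rewrite !JmulK => /oppr_inj. Qed.

Lemma JmulZ (a : R) (u : V) : Jmul (a *: u) = a *: Jmul u.
Proof. by rewrite /Jmul scale_row_mx !linearZ /= scalerN. Qed.

Lemma JmulD (u v : V) : Jmul (u + v) = Jmul u + Jmul v.
Proof. by rewrite /Jmul add_row_mx !linearD /= ?opprD. Qed.

Lemma JmulN (u : V) : Jmul (- u) = - Jmul u.
Proof. by rewrite -scaleN1r JmulZ scaleN1r. Qed.

Lemma inner_Jmul (u v : V) : inner (Jmul u) (Jmul v) = inner u v.
Proof.
rewrite !inner_split; apply: eq_bigr => i _.
by rewrite !lsubmx_Jmul !rsubmx_Jmul !mxE; ring.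
Qed.

Lemma omega_antisym (u v : V) : omega u v = - omega v u.
Proof.
rewrite /omega !inner_split -sumrN; apply: eq_bigr => i _.
by rewrite !lsubmx_Jmul !rsubmx_Jmul !mxE; ring.
Qed.

Lemma omegaxx (u : V) : omega u u = 0.
Proof.
rewrite /omega inner_split big1 // => i _.
by rewrite lsubmx_Jmul rsubmx_Jmul !mxE; ring.
Qed.

Lemma omegaDl (u v w : V) : omega (u + v) w = omega u w + omega v w.
Proof. by rewrite /omega JmulD innerDl. Qed.

Lemma omegaDr (u v w : V) : omega w (u + v) = omega w u + omega w v.
Proof. exact: innerDr. Qed.

Lemma omegaZl (a : R) (u w : V) : omega (a *: u) w = a * omega u w.
Proof. by rewrite /omega JmulZ innerZl. Qed.

Lemma omegaZr (a : R) (u w : V) : omega w (a *: u) = a * omega w u.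
Proof. exact: innerZr. Qed.

Lemma omegaNl (u w : V) : omega (- u) w = - omega u w.
Proof. by rewrite /omega JmulN innerNl. Qed.

Lemma omegaNr (u w : V) : omega w (- u) = - omega w u.
Proof. exact: innerNr. Qed.

Lemma omegaBl (u v w : V) : omega (u - v) w = omega u w - omega v w.
Proof. by rewrite omegaDl omegaNl. Qed.

Lemma omega0r (u : V) : omega u 0 = 0.
Proof. by rewrite -(scale0r 0) omegaZr mul0r. Qed.

Lemma omegaNC (u v : V) : omega (- u) v = omega v u.
Proof. by rewrite omegaNl -omega_antisym. Qed.

Lemma omegaCN (u v : V) : omega u (- v) = omega v u.
Proof. by rewrite omegaNr -omega_antisym. Qed.

Lemma inner_oppJmul (u v : V) : inner (- Jmul u) v = omega v u.
Proof. by rewrite (omega_antisym v u) innerNl. Qed.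

Lemma omegaJr (u v : V) : omega u (Jmul v) = inner u v.
Proof. exact: inner_Jmul. Qed.

Lemma halfspace_colinear (g h : V) : g != 0 ->
  (forall v, inner g v < 0 -> inner h v <= 0) -> exists c : R, h = c *: g.
Proof.
move=> g0 hg; rewrite -inner_gt0 in g0.
set c := inner h g / inner g g; have [w wE] : exists w, w = h - c *: g by eexists.
have gw : inner g w = 0.
  by rewrite wE innerBr innerZr /c -mulrA mulVf ?gt_eqF // mulr1 innerC subrr.
(* testing hg on w - s g with s > 0 and letting s go to 0 forces w = 0 *)
have wle s : 0 < s -> inner w w <= s * inner h g.
  move=> s0; have := hg (w - s *: g); rewrite !innerBr !innerZr gw.
  have -> : inner w w = inner h w by rewrite {1}wE innerBl innerZl gw mulr0 subr0.
  by rewrite subr_le0; apply; rewrite sub0r oppr_lt0 mulr_gt0.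
exists c; apply/eqP; rewrite -subr_eq0 -wE -inner_eq0 eq_le inner_ge0 andbT.
rewrite leNgt; apply/negP => wpos.
have [hg_le0|hg_gt0] := lerP (inner h g) 0; first by have := wle 1 ltr01; lra.
have := wle _ (divr_gt0 wpos (mulr_gt0 (ltr0Sn _ 1) hg_gt0)).
have -> : inner w w / (2 * inner h g) * inner h g = inner w w / 2.
  by field; rewrite gt_eqF.
lra.
Qed.

Lemma omega_annihilator_colinear (u w : V) : w != 0 ->
  (forall v, omega v w = 0 -> omega u v = 0) -> exists c : R, u = c *: w.
Proof.
move=> w0 hw; pose c := inner (Jmul u) (Jmul w) / inner (Jmul w) (Jmul w).
have Jw0 : inner (Jmul w) (Jmul w) != 0 by rewrite inner_Jmul inner_eq0.
pose v := Jmul u - c *: Jmul w.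
have vw : omega v w = 0.
  rewrite -inner_oppJmul innerNl innerBr innerZr /c innerC -mulrA mulVf //.
  by rewrite mulr1 subrr oppr0.
have Jwv : inner (Jmul w) v = 0.
  by apply/eqP; rewrite -oppr_eq0 -innerNl inner_oppJmul vw.
have /eqP : inner v v = 0 by rewrite {1}/v innerBl innerZl Jwv mulr0 subr0; exact: hw.
rewrite inner_eq0 subr_eq0 -JmulZ => /eqP /Jmul_inj ->.
by exists c.
Qed.

End SymplecticAlgebra.

Section ConvexC1Boundary.
Variables (R : realType) (n : nat) (X : set 'rV[R]_(n + n)).
Hypotheses (convX : convex X) (closedX : closed X).

Lemma boundary_sub : boundary X `<=` X.
Proof. by move=> p []; rewrite -(closure_id X).1. Qed.

Lemma defining_fun_boundary_eq0 p U rho g :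
  boundary X p -> local_defining_fun X p U rho g -> rho p = 0.
Proof.
move=> bp [[oU Up] rho_diff _ _ XU].
have : (X `&` U) p by split => //; exact: boundary_sub.
rewrite XU => -[_]; rewrite le_eqVlt => /orP [/eqP //|rho_lt0].
exfalso; case: bp => _; apply; rewrite /interior /=.
have rho_cont : {for p, continuous rho}.
  exact: differentiable_continuous (proj1 (rho_diff p Up)).
apply: (@filterS _ _ _ (X `&` U)); first by move=> ? [].
rewrite XU; near=> y; split.
  by near: y; apply: open_nbhs_nbhs.
by apply: ltW; near: y; exact: cvgr_lt rho_cont _ rho_lt0.
Unshelve. all: by end_near.
Qed.

Lemma defining_grad_supports p U rho g y :
  boundary X p -> local_defining_fun X p U rho g -> X y -> inner (g p) (y - p) <= 0.
Proof.
move=> bp dfn Xy; have rho0 := defining_fun_boundary_eq0 bp dfn.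
case: dfn => [[oU Up] rho_diff _ _ XU]; have [dp dE] := rho_diff p Up.
have Up_nbhs : nbhs p U by exact: open_nbhs_nbhs.
rewrite leNgt; apply/negP; rewrite -dE => /(diff_ray_increase dp Up_nbhs).
move=> [t [t0 t1 tU]]; apply/negP; rewrite rho0 -leNgt.
have : (X `&` U) (t *: (y - p) + p).
  split => //; have -> : t *: (y - p) + p = t *: y + (1 - t) *: p.
    by rewrite scalerBr scalerBl scale1r addrA addrAC.
  exact: convX Xy (boundary_sub bp) (ltW t0) t1.
by rewrite XU => -[].
Qed.

Lemma support_functional_colinear p U rho g h :
  boundary X p -> local_defining_fun X p U rho g ->
  (forall y, X y -> inner h y <= inner h p) -> exists c : R, h = c *: g p.
Proof.
move=> bp dfn h_max; have rho0 := defining_fun_boundary_eq0 bp dfn.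
case: dfn => [[oU Up] rho_diff _ g0 XU]; have [dp dE] := rho_diff p Up.
apply: halfspace_colinear (g0 p Up) _ => v; rewrite -dE.
have Up_nbhs : nbhs p U by exact: open_nbhs_nbhs.
move=> /(diff_ray_decrease dp Up_nbhs) [t [t0 _ tU rho_lt]].
have : (X `&` U) (t *: v + p) by rewrite XU; split => //; rewrite -rho0 ltW.
move=> [/h_max]; rewrite innerDr innerZr -subr_le0 addrK pmulr_rle0 //.
Qed.

End ConvexC1Boundary.

Section SelfPolarBody.
Variables (R : realType) (n : nat) (X : set 'rV[R]_(n + n)).
Hypotheses (convX : convex X) (closedX : closed X) (int0X : interior X 0).
Hypotheses (polarX : X = omega_polar X) (C1X : C1_boundary X).

Lemma self_polar_omega_le1 a b : X a -> X b -> omega a b <= 1.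
Proof. by move=> Xa; rewrite {1}polarX; apply. Qed.

Lemma self_polar_oppr a : X a -> X (- a).
Proof.
by move=> Xa; rewrite polarX => x Xx; rewrite omegaCN; exact: self_polar_omega_le1.
Qed.

Lemma omega_eq1_boundaryr a b : X a -> X b -> omega a b = 1 -> boundary X b.
Proof.
move=> Xa Xb ab1; split; first exact: subset_closure.
move=> /(interior_ray b) [t t0]; rewrite -[X in _ + X]scale1r -scalerDl => Xtb.
by have := self_polar_omega_le1 Xa Xtb; rewrite omegaZr ab1 mulr1; lra.
Qed.

Lemma omega_eq1_boundaryl a b : X a -> X b -> omega a b = 1 -> boundary X a.
Proof.
by move=> Xa Xb ab1; apply: omega_eq1_boundaryr (self_polar_oppr Xb) Xa _; rewrite omegaNC.
Qed.

Lemma polar_normal_colinear p U rho g y :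
  boundary X p -> local_defining_fun X p U rho g -> X y -> omega p y = 1 ->
  exists2 c : R, - Jmul y = c *: g p & c * inner (g p) p = 1.
Proof.
move=> bp dfn Xy py1.
have [|c cE] := support_functional_colinear closedX bp dfn (h := - Jmul y).
  by move=> x Xx; rewrite !inner_oppJmul py1; exact: self_polar_omega_le1.
by exists c => //; rewrite -innerZl -cE inner_oppJmul.
Qed.

Lemma fpol_exists p : boundary X p -> exists y, omega_polar X y /\ omega p y = 1.
Proof.
move=> bp; have [U [rho [g dfn]]] := C1X bp.
have [[_ Up] _ _ g0 _] := dfn; set G := g p.
have [t t0] := interior_ray G int0X; rewrite addr0 => XtG.
have Gp_gt0 : 0 < inner G p.
  have := defining_grad_supports convX closedX bp dfn XtG.
  rewrite innerBr innerZr subr_le0; apply: lt_le_trans.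
  by rewrite mulr_gt0 // inner_gt0 g0.
exists ((inner G p)^-1 *: Jmul G); rewrite omegaZr omegaJr (innerC p) mulVf ?gt_eqF //.
split => // x Xx; rewrite omegaZr omegaJr (innerC x) ler_pdivrMl // mulr1.
by have := defining_grad_supports convX closedX bp dfn Xx; rewrite innerBr subr_le0.
Qed.

Lemma fpolP p : boundary X p -> X (fpol X p) /\ omega p (fpol X p) = 1.
Proof.
move=> /fpol_exists /(xgetPex 0) [polar_f pf1]; split => //.
by rewrite {1}polarX; exact: polar_f.
Qed.

Lemma fpol_unique p y : boundary X p -> X y -> omega p y = 1 -> fpol X p = y.
Proof.
move=> bp Xy py1; have [Xf pf1] := fpolP bp; have [U [rho [g dfn]]] := C1X bp.
have [c1 c1E c1p] := polar_normal_colinear bp dfn Xf pf1.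
have [c2 c2E c2p] := polar_normal_colinear bp dfn Xy py1.
have gp0 : inner (g p) p != 0 by rewrite -unitfE; apply/unitrPr; exists c1; rewrite mulrC.
have c12 : c1 = c2 by apply: (mulIf gp0); rewrite c1p c2p.
by apply: Jmul_inj; apply: oppr_inj; rewrite c1E c2E c12.
Qed.

Lemma boundary_neq0 p : boundary X p -> p != 0.
Proof. by move=> [_ p_int]; apply: contraPneq p_int => ->. Qed.

Lemma fpol_neq0 p : boundary X p -> fpol X p != 0.
Proof.
by move=> /fpolP [_]; apply: contraPneq => ->; rewrite omega0r => /esym/eqP; rewrite oner_eq0.
Qed.

Lemma fpol_boundary p : boundary X p -> boundary X (fpol X p).
Proof.
move=> bp; have [Xf pf1] := fpolP bp.
exact: omega_eq1_boundaryr (boundary_sub closedX bp) Xf pf1.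
Qed.

Lemma fpolK p : boundary X p -> fpol X (fpol X p) = - p.
Proof.
move=> bp; have [Xf pf1] := fpolP bp.
have Xmp := self_polar_oppr (boundary_sub closedX bp).
by apply: fpol_unique (fpol_boundary bp) Xmp _; rewrite omegaCN.
Qed.

Lemma fpol_opp_fpol p : boundary X p ->
  boundary X (- fpol X p) /\ fpol X (- fpol X p) = p.
Proof.
move=> bp; have [Xf pf1] := fpolP bp; have Xp := boundary_sub closedX bp.
have fp1 : omega (- fpol X p) p = 1 by rewrite omegaNC.
have bfp := omega_eq1_boundaryl (self_polar_oppr Xf) Xp fp1.
by split => //; exact: fpol_unique.
Qed.

Lemma tangent_spaceE p v : boundary X p -> tangent_space X p v <-> omega v (fpol X p) = 0.
Proof.
move=> bp; have [Xf pf1] := fpolP bp.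
split => [[U [rho [g [dfn gv]]]]|vf0].
  have [c cE _] := polar_normal_colinear bp dfn Xf pf1.
  by rewrite -inner_oppJmul cE innerZl gv mulr0.
have [U [rho [g dfn]]] := C1X bp; exists U, rho, g; split => //.
have [c cE cp] := polar_normal_colinear bp dfn Xf pf1.
have c0 : c != 0 by rewrite -unitfE; apply/unitrPr; exists (inner (g p) p).
have /eqP : c * inner (g p) v = 0 by rewrite -innerZl -cE inner_oppJmul.
by rewrite mulf_eq0 (negbTE c0) => /eqP.
Qed.

Lemma char_dirE p u : boundary X p ->
  char_dir X p u <-> exists mu : R, u = mu *: fpol X p.
Proof.
move=> bp; split => [[_ u_perp]|[mu ->]].
  apply: omega_annihilator_colinear (fpol_neq0 bp) _ => v.
  by move=> /(tangent_spaceE _ bp); exact: u_perp.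
split; first by apply/(tangent_spaceE _ bp); rewrite omegaZl omegaxx mulr0.
by move=> v /(tangent_spaceE _ bp) vf0; rewrite omegaZl omega_antisym vf0 oppr0 mulr0.
Qed.

Lemma billiard_point_shift x : boundary X x ->
  billiard_point X (x + fpol X x) (fpol X x).
Proof.
move=> bx; have [Xf xf1] := fpolP bx.
split; [exact: fpol_boundary | | |].
- by rewrite -subr_eq0 addrK boundary_neq0.
- apply/(char_dirE _ (fpol_boundary bx)); exists (-1).
  by rewrite addrK fpolK // scaleN1r opprK.
- by rewrite opprD addrCA subrr addr0 omegaCN xf1 ltr01.
Qed.

(* with r = f(p) and z - p = mu r (mu < 0), the two polarity inequalities
   omega(p, -x) <= 1 and omega(f x, r) <= 1 force omega(r, x) = 0 *)
Lemma billiard_point_unique x p : boundary X x ->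
  billiard_point X (x + fpol X x) p -> p = fpol X x.
Proof.
move=> bx [bp _ /(char_dirE _ bp) [mu zpE] pz_gt0].
have [Xf xf1] := fpolP bx; have [Xr pr1] := fpolP bp.
set q := fpol X x in Xf xf1 zpE pz_gt0 *; set r := fpol X p in Xr pr1 zpE *.
have mu_lt0 : mu < 0.
  by move: pz_gt0; rewrite -opprB zpE omegaNr omegaZr pr1 mulr1 oppr_gt0.
have pE : p = x + q - mu *: r by rewrite -zpE opprB addrC subrK.
have qE : q = p - x + mu *: r by rewrite -zpE addrC addrA subrK addrAC subrr add0r.
have Xp := boundary_sub closedX bp; have Xmx := self_polar_oppr (boundary_sub closedX bx).
have px := self_polar_omega_le1 Xp Xmx.
have qr := self_polar_omega_le1 Xf Xr.
have pxE : omega p (- x) = 1 - mu * omega r (- x).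
  by rewrite pE omegaBl omegaDl omegaZl omegaCN omegaxx add0r omegaCN xf1.
have qrE : omega q r = 1 - omega r (- x).
  by rewrite qE omegaDl omegaBl omegaZl omegaxx mulr0 addr0 pr1 omegaCN.
have rx0 : omega r (- x) = 0 by rewrite pxE in px; rewrite qrE in qr; nra.
have mr_q1 : omega (- r) q = 1 by rewrite omegaNC qrE rx0 subr0.
have mr_p1 : omega (- r) p = 1 by rewrite omegaNC.
have bmr := omega_eq1_boundaryl (self_polar_oppr Xr) Xf mr_q1.
by rewrite -(fpol_unique bmr Xp mr_p1) (fpol_unique bmr Xf mr_q1).
Qed.

Lemma outer_billiard_shift x : boundary X x ->
  outer_billiard X (x + fpol X x) = fpol X x - x.
Proof.
move=> bx; rewrite /outer_billiard.
rewrite (xget_unique 0 (billiard_point_shift bx) (fun p => billiard_point_unique bx)).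
by rewrite mulr2n scalerDl scale1r opprD addrACA subrr addr0.
Qed.

Lemma shift_notin x : boundary X x -> ~ X (x + fpol X x).
Proof.
move=> bx Xxf; have [_ xf1] := fpolP bx.
have : fpol X x = x + fpol X x by apply: fpol_unique; rewrite // omegaDr omegaxx add0r.
move=> /eqP; rewrite -subr_eq0 opprD addrCA subrr addr0 oppr_eq0.
by rewrite (negbTE (boundary_neq0 bx)).
Qed.

Lemma outer_billiard_shiftE x : boundary X x ->
  outer_billiard X (x + fpol X x) = fpol X x + fpol X (fpol X x).
Proof. by move=> bx; rewrite outer_billiard_shift ?fpolK. Qed.

Lemma outer_billiard_shift_image :
  outer_billiard X @` [set x + fpol X x | x in boundary X] =
  [set x + fpol X x | x in boundary X].
Proof.
apply/seteqP; split => [_ [_ [x bx <-] <-]|_ [x bx <-]].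
  by rewrite outer_billiard_shiftE //; exists (fpol X x) => //; exact: fpol_boundary.
have [bfx ffx] := fpol_opp_fpol bx.
exists (- fpol X x + fpol X (- fpol X x)); first by exists (- fpol X x).
by rewrite outer_billiard_shiftE // ffx.
Qed.

End SelfPolarBody.

Theorem mainTheorem6 (R : realType) (n : nat) (X : set 'rV[R]_(n + n)) :
  convex_body_0 X -> symp_self_polar X -> C1_boundary X ->
  let Y := [set x + fpol X x | x in boundary X] in
  [/\ Y `<=` ~` X,
      outer_billiard X @` Y = Y &
      forall x, boundary X x ->
        outer_billiard X (x + fpol X x) = fpol X x + fpol X (fpol X x)].
Proof.
move=> [convX [compactX int0X]] polarX C1X Y.
have closedX : closed X := compact_closed (@norm_hausdorff _ _) compactX.
split; last exact: outer_billiard_shiftE.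
- by move=> _ [x bx <-]; exact: shift_notin bx.
- exact: outer_billiard_shift_image.
Qed.
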